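(* Let $n\ge 1$, $\rho\in(0,1)$ and $a\in(0,1)$ with $2^n a\in\mathbb Z$. Then $\mathbf{MaxStab}_\Phi(a)\le \Gamma_\rho(a)$, where $$\Gamma_\rho(a):=\sup_{P_{Z|S}}\ \mathbb E[\Phi(a+\rho Z)]\quad\text{s.t.}\quad 0\le a+\rho Z\le 1\ \text{a.s.},\quad \mathbb E[Z]=0,\quad \mathbb E[Z^2]\le \mathbb E[SZ],$$ the supremum being over all conditional probability mass functions $P_{Z|S}$ (with $Z$ real-valued), where $(S,Z)\sim P_SP_{Z|S}$ and $S$ has distribution $P_S(-a)=1-a$, $P_S(1-a)=a$.
   Context: Let $n\ge1$, $\rho\in[0,1]$. Let $\mathbf X$ be uniformly distributed on $\{-1,1\}^n$ and let $\mathbf Y$ be obtained from $\mathbf X$ by independently flipping the sign of each coordinate with probability $(1-\rho)/2$. For a Boolean function $f:\{-1,1\}^n\to\{0,1\}$ define $T_\rho f(\mathbf x)=\mathbb E[f(\mathbf Y)\mid \mathbf X=\mathbf x]$. Let $\Phi:[0,1]\to\mathbb R$ be continuous and strictly convex. The $\Phi$-stability is $\mathbf{Stab}_\Phi[f]=\mathbb E[\Phi(T_\rho f(\mathbf X))]$, and for $a\in 2^{-n}\{0,1,\dots,2^n\}$, $\mathbf{MaxStab}_\Phi(a)=\max\{\mathbf{Stab}_\Phi[f]: f:\{-1,1\}^n\to\{0,1\},\ \mathbb E f(\mathbf X)=a\}$. *)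

From HB Require Import structures.
From mathcomp Require Import all_boot all_order all_algebra.
From mathcomp Require Import all_classical all_reals all_analysis.
Set Implicit Arguments. Unset Strict Implicit. Unset Printing Implicit Defensive.
Import Order.TTheory GRing.Theory Num.Theory.
Import numFieldNormedType.Exports.
Local Open Scope classical_set_scope.
Local Open Scope ring_scope.

(* The cube {-1,1}^n is encoded as {ffun 'I_n -> bool}; the boolean value
   only encodes the sign of each coordinate (true <-> -1). *)
Definition cube (n : nat) := {ffun 'I_n -> bool}.

Section defs.
Variable R : realType.

(* P(Y = y | X = x): each coordinate flipped independently w.p. (1-rho)/2 *)
Definition noise_kernel (n : nat) (rho : R) (x y : cube n) : R :=
  \prod_(i < n) (if x i == y i then (1 + rho) / 2 else (1 - rho) / 2).

Definition T_rho (n : nat) (rho : R) (f : cube n -> bool) (x : cube n) : R :=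
  \sum_(y : cube n) noise_kernel rho x y * (f y)%:R.

Definition mean (n : nat) (f : cube n -> bool) : R :=
  (2 ^+ n)^-1 * \sum_(x : cube n) (f x)%:R.

Definition Stab (n : nat) (rho : R) (Phi : R -> R) (f : cube n -> bool) : R :=
  (2 ^+ n)^-1 * \sum_(x : cube n) Phi (T_rho rho f x).

(* MaxStab_Phi(a) = max { Stab_Phi[f] : E f = a } (a finite set) *)
Definition MaxStab (n : nat) (rho : R) (Phi : R -> R) (a : R) : R :=
  sup [set Stab rho Phi (f : cube n -> bool) | f in [set f : {ffun cube n -> bool} | mean f = a]].

Definition strictly_convex01 (Phi : R -> R) : Prop :=
  forall x y t : R, 0 <= x <= 1 -> 0 <= y <= 1 -> x != y -> 0 < t < 1 ->
    Phi (t * x + (1 - t) * y) < t * Phi x + (1 - t) * Phi y.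

(* Expectation against a discrete (countably supported) distribution given by
   atoms z k with weights w k:  sum_k w k * g (z k). *)
Definition dexp (w z : nat -> R) (g : R -> R) : R :=
  limn (series ((fun k => w k * g (z k)) : R^nat)).

Definition is_pmf (w : nat -> R) : Prop :=
  (forall k, 0 <= w k) /\ series (w : R^nat) @ \oo --> (1 : R).

(* Feasibility of a conditional pmf P_{Z|S}, where S = -a w.p. 1-a and
   S = 1-a w.p. a; P_{Z|S=-a} = (w0,z0), P_{Z|S=1-a} = (w1,z1). *)
Definition Gamma_feasible (rho a : R) (w0 z0 w1 z1 : nat -> R) : Prop :=
  [/\ is_pmf w0 /\ is_pmf w1,
      (forall k, 0 < w0 k -> 0 <= a + rho * z0 k <= 1),
      (forall k, 0 < w1 k -> 0 <= a + rho * z1 k <= 1),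
      (1 - a) * dexp w0 z0 id + a * dexp w1 z1 id = 0 &
      (* E[Z^2] <= E[S Z] *)
      (1 - a) * dexp w0 z0 (fun z => z ^+ 2) + a * dexp w1 z1 (fun z => z ^+ 2)
        <= (1 - a) * dexp w0 z0 (fun z => - a * z)
           + a * dexp w1 z1 (fun z => (1 - a) * z)].

Definition Gamma_obj (Phi : R -> R) (rho a : R) (w0 z0 w1 z1 : nat -> R) : R :=
  (1 - a) * dexp w0 z0 (fun z => Phi (a + rho * z))
  + a * dexp w1 z1 (fun z => Phi (a + rho * z)).

Definition Gamma (Phi : R -> R) (rho a : R) : \bar R :=
  ereal_sup [set (Gamma_obj Phi rho a p.1.1 p.1.2 p.2.1 p.2.2)%:E |
             p in [set p : ((nat -> R) * (nat -> R)) * ((nat -> R) * (nat -> R)) |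
               Gamma_feasible rho a p.1.1 p.1.2 p.2.1 p.2.2]].
End defs.

From HB Require Import structures.
From mathcomp Require Import all_boot all_order all_algebra.
From mathcomp Require Import all_classical all_reals all_analysis.
From mathcomp Require Import ring lra.
Import Order.TTheory GRing.Theory Num.Theory.
Import numFieldNormedType.Exports.
Local Open Scope classical_set_scope.
Local Open Scope ring_scope.
Set Implicit Arguments. Unset Strict Implicit.

(* Fix f : {-1,1}^n -> {0,1} with E f = a and put
     S := f(X) - a,   Z := (T_rho f(X) - a) / rho.
   Conditionally on S (that is, on f(X)) the law of Z is a finitely supported
   pmf, so (S, Z) is a feasible point of the program defining Gamma_rho(a),
   and its objective E[Phi(a + rho Z)] = E[Phi(T_rho f(X))] is Stab_Phi[f].
   Every constraint is immediate except E[Z^2] <= E[S Z], i.e. the energy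
   inequality  E[(T_rho f - a)^2] <= rho E[(f - a)(T_rho f - a)].  With
   Q(t) := sum_{x,y} f(x) K_t(x,y) f(y) for the noise kernel K_t it reads
   Q(rho^2) - Q(0) <= rho (Q(rho) - Q(0)), which holds termwise in the
   Fourier expansion Q(t) = 2^-n sum_A t^|A| fhat(A)^2. *)

Section NoiseKernel.
Variables (R : realType) (n : nat).

(* The sign +-1 encoded by a boolean, the Walsh character x |-> prod_{i in A} x_i,
   and the level |A| of a subset A of coordinates (encoded as a cube point). *)
Definition sgn (b : bool) : R := if b then -1 else 1.
Definition chi (A x : cube n) : R := \prod_(i < n) (if A i then sgn (x i) else 1).
Definition level (A : cube n) : nat := #|[pred i | A i]|.

Lemma prod_if_level (A : cube n) (t : R) :
  \prod_(i < n) (if A i then t else 1) = t ^+ level A.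
Proof. by rewrite -big_mkcond /= prodr_const. Qed.

Lemma sum_prod_cube (F : 'I_n -> bool -> R) :
  \sum_(x : cube n) \prod_(i < n) F i (x i) = \prod_(i < n) (F i true + F i false).
Proof.
rewrite (eq_bigr (fun i => \sum_(b : bool) F i b)) => [|i _]; last by rewrite big_bool.
by rewrite bigA_distr_bigA.
Qed.

Lemma card_cube : #|cube n| = (2 ^ n)%N.
Proof. by rewrite card_ffun card_bool card_ord. Qed.

Lemma sum_const_cube (c : R) : \sum_(x : cube n) c = 2 ^+ n * c.
Proof. by rewrite sumr_const card_cube -[c *+ _]mulr_natl natrX. Qed.

Lemma noise_kernel1 (t : R) (b c : bool) :
  (if b == c then (1 + t) / 2 else (1 - t) / 2) = 2^-1 * (1 + t * sgn b * sgn c).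
Proof. by case: b; case: c => /=; rewrite /sgn; field. Qed.

Lemma noise_kernel_fourier (t : R) (x y : cube n) :
  noise_kernel t x y = (2 ^+ n)^-1 * \sum_(A : cube n) t ^+ level A * chi A x * chi A y.
Proof.
rewrite /noise_kernel (eq_bigr (fun i => 2^-1 * (1 + t * sgn (x i) * sgn (y i))));
  last by move=> i _; rewrite noise_kernel1.
rewrite big_split /= prodr_const card_ord exprVn; congr (_ * _).
rewrite (eq_bigr (fun i => \sum_(b : bool) (if b then t * sgn (x i) * sgn (y i) else 1)));
  last by move=> i _; rewrite big_bool /= addrC.
rewrite bigA_distr_bigA; apply: eq_bigr => A _.
rewrite -prod_if_level /chi -!big_split /=; apply: eq_bigr => i _.
by case: (A i); rewrite ?mulr1.
Qed.

Lemma noise_kernel_sym (t : R) (x y : cube n) : noise_kernel t x y = noise_kernel t y x.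
Proof. by apply: eq_bigr => i _; rewrite eq_sym. Qed.

Lemma noise_kernel_semigroup (t : R) (y z : cube n) :
  \sum_(x : cube n) noise_kernel t x y * noise_kernel t x z = noise_kernel (t ^+ 2) y z.
Proof.
rewrite /noise_kernel (eq_bigr (fun x : cube n => \prod_(i < n)
   ((if x i == y i then (1 + t) / 2 else (1 - t) / 2)
    * (if x i == z i then (1 + t) / 2 else (1 - t) / 2)))); last by move=> x _; rewrite big_split.
rewrite (sum_prod_cube (fun i b => (if b == y i then (1 + t) / 2 else (1 - t) / 2)
   * (if b == z i then (1 + t) / 2 else (1 - t) / 2))).
by apply: eq_bigr => i _; case: (y i); case: (z i) => /=; field.
Qed.

Lemma noise_kernel_col_sum (t : R) (y : cube n) : \sum_(x : cube n) noise_kernel t x y = 1.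
Proof.
rewrite /noise_kernel
  (sum_prod_cube (fun i b => if b == y i then (1 + t) / 2 else (1 - t) / 2)) big1 // => i _.
by case: (y i) => /=; field.
Qed.

Lemma noise_kernel_row_sum (t : R) (x : cube n) : \sum_(y : cube n) noise_kernel t x y = 1.
Proof. by rewrite -(noise_kernel_col_sum t x); apply: eq_bigr => y _; exact: noise_kernel_sym. Qed.

Lemma noise_kernel_ge0 (t : R) (x y : cube n) : 0 <= t <= 1 -> 0 <= noise_kernel t x y.
Proof. by move=> /andP[t0 t1]; apply: prodr_ge0 => i _; case: (_ == _); apply: divr_ge0; lra. Qed.

Lemma noise_kernel0 (x y : cube n) : noise_kernel (0 : R) x y = (2 ^+ n)^-1.
Proof.
rewrite /noise_kernel (eq_bigr (fun=> 2^-1)) => [|i _]; last first.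
  by case: (_ == _); rewrite ?addr0 ?subr0 mul1r.
by rewrite prodr_const card_ord exprVn.
Qed.

End NoiseKernel.
Arguments chi {R n}.

Section QuadraticForm.
Variables (R : realType) (n : nat).

Definition Qf (F : cube n -> R) (t : R) : R :=
  \sum_(x : cube n) \sum_(y : cube n) F x * noise_kernel t x y * F y.

Lemma Qf_fourier (F : cube n -> R) (t : R) : Qf F t =
  (2 ^+ n)^-1 * \sum_(A : cube n) t ^+ level A * (\sum_(x : cube n) F x * chi A x) ^+ 2.
Proof.
transitivity (\sum_(x : cube n) \sum_(A : cube n) \sum_(y : cube n)
   (2 ^+ n)^-1 * (t ^+ level A * ((F x * chi A x) * (F y * chi A y)))).
  apply: eq_bigr => x _; rewrite exchange_big; apply: eq_bigr => y _.
  by rewrite noise_kernel_fourier !mulr_sumr mulr_suml; apply: eq_bigr => A _; ring.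
rewrite exchange_big /= mulr_sumr; apply: eq_bigr => A _.
rewrite expr2 mulr_suml !mulr_sumr; apply: eq_bigr => x _.
by rewrite !mulr_sumr; apply: eq_bigr => y _; ring.
Qed.

(* Each Fourier level satisfies the inequality: r^(2k) - 0^k <= r (r^k - 0^k). *)
Lemma monomial_ineq (r : R) (k : nat) : 0 < r < 1 ->
  0 <= r * r ^+ k - (r ^+ 2) ^+ k + (1 - r) * 0 ^+ k.
Proof.
move=> /andP[r0 r1]; case: k => [|k]; first by rewrite !expr0; lra.
have rk0 : 0 <= r ^+ k by rewrite exprn_ge0 // ltW.
have rk1 : 0 <= 1 - r ^+ k by rewrite subr_ge0 exprn_ile1 // ltW.
rewrite expr0n /= mulr0 addr0 exprAC expr2 !exprS.
have := mulr_ge0 (mulr_ge0 (ltW r0) (ltW r0)) (mulr_ge0 rk0 rk1); nra.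
Qed.

Lemma Qf_ineq (F : cube n -> R) (r : R) : 0 < r < 1 ->
  Qf F (r ^+ 2) - Qf F 0 <= r * (Qf F r - Qf F 0).
Proof.
move=> hr; rewrite -subr_ge0 !Qf_fourier.
set c := ((2 : R) ^+ n)^-1; set fh := fun A => (\sum_(x : cube n) F x * chi A x) ^+ 2.
have -> : r * (c * \sum_A r ^+ level A * fh A - c * \sum_A 0 ^+ level A * fh A)
   - (c * \sum_A (r ^+ 2) ^+ level A * fh A - c * \sum_A 0 ^+ level A * fh A)
   = c * \sum_(A : cube n)
       (r * r ^+ level A - (r ^+ 2) ^+ level A + (1 - r) * 0 ^+ level A) * fh A.
  rewrite !mulr_sumr -!sumrB mulr_sumr -!sumrB; apply: eq_bigr => A _; ring.
apply: mulr_ge0; first by rewrite invr_ge0 exprn_ge0.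
by apply: sumr_ge0 => A _; apply: mulr_ge0; [exact: monomial_ineq | exact: sqr_ge0].
Qed.

End QuadraticForm.

Section NoiseOperator.
Variables (R : realType) (n : nat) (rho : R) (f : cube n -> bool).

Let F (x : cube n) : R := (f x)%:R.

Lemma sum_mean : \sum_(x : cube n) F x = 2 ^+ n * mean R f.
Proof. by rewrite /mean mulrA divff ?mul1r // gt_eqF // exprn_gt0. Qed.

(* T_rho f is an average of values of f, hence lies in [0,1]. *)
Lemma T_rho01 (x : cube n) : 0 <= rho <= 1 -> 0 <= T_rho rho f x <= 1.
Proof.
move=> hr; apply/andP; split.
  by apply: sumr_ge0 => y _; apply: mulr_ge0; [exact: noise_kernel_ge0 | case: (f y)].
rewrite -(noise_kernel_row_sum rho x); apply: ler_sum => y _.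
by have := noise_kernel_ge0 x y hr; case: (f y); rewrite ?mulr1 ?mulr0.
Qed.

Lemma sum_T_rho : \sum_(x : cube n) T_rho rho f x = \sum_(x : cube n) F x.
Proof.
rewrite /T_rho exchange_big /=; apply: eq_bigr => y _.
by rewrite -mulr_suml noise_kernel_col_sum mul1r.
Qed.

Lemma sum_f_T_rho : \sum_(x : cube n) F x * T_rho rho f x = Qf F rho.
Proof.
apply: eq_bigr => x _; rewrite /T_rho mulr_sumr.
by apply: eq_bigr => y _; rewrite mulrA.
Qed.

Lemma sum_T_rho_sq : \sum_(x : cube n) T_rho rho f x ^+ 2 = Qf F (rho ^+ 2).
Proof.
transitivity (\sum_(x : cube n) \sum_(y : cube n) \sum_(z : cube n)
    (noise_kernel rho x y * noise_kernel rho x z) * (F y * F z)).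
  apply: eq_bigr => x _; rewrite /T_rho expr2 mulr_suml; apply: eq_bigr => y _.
  by rewrite mulr_sumr; apply: eq_bigr => z _; rewrite /F; ring.
rewrite exchange_big /=; apply: eq_bigr => y _.
rewrite exchange_big /=; apply: eq_bigr => z _.
by rewrite -mulr_suml noise_kernel_semigroup; ring.
Qed.

Lemma Qf_at0 : Qf F 0 = 2 ^+ n * mean R f ^+ 2.
Proof.
have -> : Qf F 0 = (2 ^+ n)^-1 * ((\sum_(x : cube n) F x) * (\sum_(y : cube n) F y)).
  rewrite /Qf big_distrlr mulr_sumr; apply: eq_bigr => x _; rewrite mulr_sumr.
  by apply: eq_bigr => y _; rewrite noise_kernel0 mulrAC mulrC.
by rewrite sum_mean; field; rewrite gt_eqF // exprn_gt0.
Qed.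

Lemma noise_energy : 0 < rho < 1 ->
  \sum_(x : cube n) (T_rho rho f x - mean R f) ^+ 2
  <= rho * \sum_(x : cube n) (F x - mean R f) * (T_rho rho f x - mean R f).
Proof.
move=> hr; set a := mean R f; set T := T_rho rho f.
have sq : \sum_(x : cube n) (T x - a) ^+ 2 = Qf F (rho ^+ 2) - Qf F 0.
  transitivity (\sum_(x : cube n) (T x ^+ 2 + (- 2 * a) * T x + a ^+ 2));
    first by apply: eq_bigr => x _; ring.
  rewrite !big_split /= sum_const_cube -mulr_sumr sum_T_rho_sq sum_T_rho sum_mean Qf_at0.
  by rewrite -/a; ring.
have cross : \sum_(x : cube n) (F x - a) * (T x - a) = Qf F rho - Qf F 0.
  transitivity (\sum_(x : cube n) (F x * T x + (- a) * F x + (- a) * T x + a ^+ 2));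
    first by apply: eq_bigr => x _; ring.
  rewrite !big_split /= sum_const_cube -!mulr_sumr sum_f_T_rho sum_T_rho sum_mean Qf_at0.
  by rewrite -/a; ring.
by rewrite sq cross; exact: Qf_ineq.
Qed.

End NoiseOperator.

Section FinitePmf.
Variable R : realType.

Lemma series_finite (u : nat -> R) (N : nat) : (forall k, (N <= k)%N -> u k = 0) ->
  series u @ \oo --> \sum_(0 <= k < N) u k.
Proof.
move=> hu; apply: cvg_near_cst; near=> m.
have hm : (N <= m)%N by near: m; exists N.
rewrite /series /= (big_cat_nat (leq0n N) hm) /=.
rewrite [X in _ + X]big_nat_cond [X in _ + X]big1 ?addr0 // => k /andP[/andP[hk _] _].
exact: hu.
Unshelve. all: end_near.
Qed.

Lemma dexp_finite (w z : nat -> R) (g : R -> R) (N : nat) :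
  (forall k, (N <= k)%N -> w k = 0) -> dexp w z g = \sum_(0 <= k < N) w k * g (z k).
Proof.
move=> hw; apply: cvg_lim => //.
by apply: series_finite => k hk; rewrite hw // mul0r.
Qed.

(* Enumerating a finite type T turns a function W : T -> R into a finitely
   supported sequence of weights on the atoms enum T. *)
Variables (T : finType) (x0 : T).

Definition atom (k : nat) : T := nth x0 (enum T) k.
Definition lift_w (W : T -> R) (k : nat) : R := if (k < #|T|)%N then W (atom k) else 0.

Lemma lift_w0 (W : T -> R) (k : nat) : (#|T| <= k)%N -> lift_w W k = 0.
Proof. by rewrite /lift_w leqNgt => /negbTE ->. Qed.

Lemma sum_atoms (W : T -> R) : \sum_(0 <= k < #|T|) lift_w W k = \sum_(x : T) W x.
Proof.
rewrite -big_enum /= (big_nth x0) -cardT.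
by apply: eq_big_nat => k /andP[_ hk]; rewrite /lift_w hk.
Qed.

Lemma dexp_lift (W : T -> R) (Z : T -> R) (g : R -> R) :
  dexp (lift_w W) (Z \o atom) g = \sum_(x : T) W x * g (Z x).
Proof.
rewrite (dexp_finite _ _ (@lift_w0 W)) -(sum_atoms (fun x => W x * g (Z x))).
by apply: eq_big_nat => k /andP[_ hk]; rewrite /lift_w hk.
Qed.

Lemma lift_pmf (W : T -> R) :
  (forall x, 0 <= W x) -> \sum_(x : T) W x = 1 -> is_pmf (lift_w W).
Proof.
move=> W0 W1; split; first by move=> k; rewrite /lift_w; case: ifP.
by rewrite -W1 -sum_atoms; exact: series_finite (@lift_w0 W).
Qed.

End FinitePmf.

Section Conditioning.
(* Conditioning the uniform law on a finite type T on the two values of a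
   boolean function f of mean a in (0,1). *)
Variables (R : realType) (T : finType) (x0 : T) (f : T -> bool) (a : R).
Hypothesis a01 : 0 < a < 1.
Hypothesis f_mean : \sum_(x : T) (f x)%:R = #|T|%:R * a.

Definition weight_off (x : T) : R := if f x then 0 else (#|T|%:R * (1 - a))^-1.
Definition weight_on (x : T) : R := if f x then (#|T|%:R * a)^-1 else 0.

Let card_neq0 : (#|T|%:R : R) != 0.
Proof. by rewrite pnatr_eq0 -lt0n; apply/card_gt0P; exists x0. Qed.

Lemma weight_off_pmf : is_pmf (lift_w x0 weight_off).
Proof.
apply: lift_pmf => [x|]; first by rewrite /weight_off; case: (f x) => //;
  rewrite invr_ge0 mulr_ge0 // subr_ge0; case/andP: a01 => _ /ltW.
rewrite (eq_bigr (fun x => (#|T|%:R * (1 - a))^-1 * (1 - (f x)%:R))) => [|x _];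
  last by rewrite /weight_off; case: (f x); rewrite /= ?subrr ?mulr0 ?subr0 ?mulr1.
rewrite -mulr_sumr sumrB f_mean sumr_const -[_ *+ _]mulr_natl mulr1.
by field; rewrite card_neq0 subr_eq0 eq_sym lt_eqF //; case/andP: a01.
Qed.

Lemma weight_on_pmf : is_pmf (lift_w x0 weight_on).
Proof.
apply: lift_pmf => [x|]; first by rewrite /weight_on; case: (f x) => //;
  rewrite invr_ge0 mulr_ge0 //; case/andP: a01 => /ltW.
rewrite (eq_bigr (fun x => (#|T|%:R * a)^-1 * (f x)%:R)) => [|x _];
  last by rewrite /weight_on; case: (f x); rewrite /= ?mulr0 ?mulr1.
by rewrite -mulr_sumr f_mean; field; rewrite card_neq0 gt_eqF //; case/andP: a01.
Qed.

Lemma mixture_dexp (Z : T -> R) (g0 g1 : R -> R) :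
  (1 - a) * dexp (lift_w x0 weight_off) (Z \o atom x0) g0
  + a * dexp (lift_w x0 weight_on) (Z \o atom x0) g1
  = #|T|%:R^-1 * \sum_(x : T) (if f x then g1 (Z x) else g0 (Z x)).
Proof.
have [a0 a1] : 0 < a /\ a < 1 by apply/andP.
rewrite !dexp_lift !mulr_sumr -big_split /=; apply: eq_bigr => x _.
rewrite /weight_off /weight_on; case: (f x) => /=; field;
  by rewrite card_neq0 ?gt_eqF ?subr_gt0.
Qed.

End Conditioning.

Section FeasiblePoint.
Variables (R : realType) (n : nat) (Phi : R -> R) (rho : R) (f : cube n -> bool).
Hypothesis rho01 : 0 < rho < 1.
Hypothesis mean01 : 0 < mean R f < 1.

Let a := mean R f.
Let x0 : cube n := [ffun=> false].

Definition fluct (x : cube n) : R := (T_rho rho f x - a) / rho.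

Let fluct_eq (x : cube n) : a + rho * fluct x = T_rho rho f x.
Proof. by rewrite /fluct; field; rewrite gt_eqF //; case/andP: rho01. Qed.

Let f_mean : \sum_(x : cube n) (f x)%:R = #|cube n|%:R * a.
Proof. by rewrite sum_mean card_cube natrX. Qed.

Let mix := mixture_dexp x0 f mean01 fluct.

Let sum_fluct : \sum_(x : cube n) fluct x = 0.
Proof.
rewrite -mulr_suml sumrB sum_T_rho sum_mean sum_const_cube /a.
by rewrite subrr mul0r.
Qed.

(* E[Z^2] <= E[S Z], from the energy inequality divided by rho^2. *)
Let fluct_energy :
  \sum_(x : cube n) fluct x ^+ 2 <= \sum_(x : cube n) ((f x)%:R - a) * fluct x.
Proof.
have [r0 _] : 0 < rho /\ rho < 1 by apply/andP.
have -> : \sum_(x : cube n) fluct x ^+ 2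
    = rho^-1 ^+ 2 * \sum_(x : cube n) (T_rho rho f x - a) ^+ 2.
  by rewrite mulr_sumr; apply: eq_bigr => x _; rewrite /fluct exprMn mulrC.
have -> : \sum_(x : cube n) ((f x)%:R - a) * fluct x
    = rho^-1 ^+ 2 * (rho * \sum_(x : cube n) ((f x)%:R - a) * (T_rho rho f x - a)).
  rewrite mulrA expr2 divfK ?gt_eqF // mulr_sumr.
  by apply: eq_bigr => x _; rewrite /fluct; ring.
by apply: ler_wpM2l; [rewrite exprn_ge0 // invr_ge0 ltW | exact: noise_energy].
Qed.

Lemma stab_feasible :
  exists p : ((nat -> R) * (nat -> R)) * ((nat -> R) * (nat -> R)),
    Gamma_feasible rho a p.1.1 p.1.2 p.2.1 p.2.2 /\
    Gamma_obj Phi rho a p.1.1 p.1.2 p.2.1 p.2.2 = Stab rho Phi f.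
Proof.
exists ((lift_w x0 (weight_off f a), fluct \o atom x0),
        (lift_w x0 (weight_on f a), fluct \o atom x0)) => /=.
have hr : 0 <= rho <= 1 by case/andP: rho01 => /ltW -> /ltW.
have range k : 0 <= a + rho * (fluct \o atom x0) k <= 1 by rewrite /= fluct_eq T_rho01.
split; first split.
- by split; [exact: weight_off_pmf | exact: weight_on_pmf].
- by move=> k _; exact: range.
- by move=> k _; exact: range.
- by rewrite mix (eq_bigr _ (fun x _ => if_same _ _)) sum_fluct mulr0.
- rewrite !mix; apply: ler_wpM2l; first by rewrite invr_ge0.
  rewrite (eq_bigr _ (fun x _ => if_same _ _))
    [X in _ <= X](eq_bigr (fun x => ((f x)%:R - a) * fluct x)) => [|x _];
    first exact: fluct_energy.
  by case: (f x); rewrite /= ?mulr1n ?mulr0n; ring.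
rewrite /Gamma_obj mix /Stab card_cube natrX; congr (_ * _); apply: eq_bigr => x _.
by rewrite if_same fluct_eq.
Qed.

End FeasiblePoint.

Lemma exists_bool_fun_count (R : realType) (T : finType) (x0 : T) (k : nat) :
  (k <= #|T|)%N -> exists g : {ffun T -> bool}, \sum_(x : T) (g x)%:R = k%:R :> R.
Proof.
move=> hk; exists [ffun x => (index x (enum T) < k)%N].
rewrite -big_enum /= (big_nth x0) -cardT.
rewrite (eq_big_nat _ _ (F2 := fun i => ((i < k)%N)%:R)) => [|i /andP[_ hi]]; last first.
  by rewrite ffunE index_uniq ?enum_uniq // -cardT.
rewrite (big_cat_nat (leq0n k) hk) /= [X in _ + X]big_nat_cond [X in _ + X]big1 ?addr0;
  last by move=> i /andP[/andP[hi _] _]; rewrite ltnNge hi.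
rewrite big_nat_cond (eq_bigr (fun=> 1)) => [|i /andP[/andP[_ ->] _]] //.
by rewrite -big_nat_cond sumr_const_nat subn0.
Qed.

Lemma exists_mean (R : realType) (n : nat) (a : R) : 0 < a < 1 ->
  (exists k : nat, a = k%:R / 2 ^+ n) -> exists f : {ffun cube n -> bool}, mean R f = a.
Proof.
move=> /andP[_ a1] [k ak].
have tn0 : (0 : R) < 2 ^+ n by rewrite exprn_gt0.
have hk : (k <= #|cube n|)%N.
  rewrite -(ler_nat R) card_cube natrX; apply: ltW.
  by rewrite ak ltr_pdivrMr // mul1r in a1.
have [g hg] := exists_bool_fun_count R ([ffun=> false] : cube n) hk.
by exists g; rewrite /mean hg ak mulrC.
Qed.

Lemma sup_le_ereal (R : realType) (E : set R) (G : \bar R) :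
  E !=set0 -> (forall r, E r -> (r%:E <= G)%E) -> ((sup E)%:E <= G)%E.
Proof.
move=> [r0 Er0] ub; case eqG: G => [g||]; last 2 first.
- exact: leey.
- by have := ub r0 Er0; rewrite eqG leeNy_eq.
rewrite lee_fin; apply: ge_sup => [|r Er]; first by exists r0.
by have := ub r Er; rewrite eqG lee_fin.
Qed.

Theorem theorem2p1 (R : realType) (Phi : R -> R) (n : nat) (rho a : R) :
  {within `[0, 1], continuous Phi} ->
  strictly_convex01 Phi ->
  (1 <= n)%N ->
  0 < rho < 1 ->
  0 < a < 1 ->
  (exists k : nat, a = k%:R / 2 ^+ n) ->
  ((MaxStab n rho Phi a)%:E <= Gamma Phi rho a)%E.
Proof.
move=> _ _ _ hr ha hk; apply: sup_le_ereal.
  have [f hf] := exists_mean ha hk.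
  by exists (Stab rho Phi f); exists f.
move=> _ [f /= hf <-]; apply: ereal_sup_ubound.
have [p [feas obj]] := @stab_feasible R n Phi rho f hr ltac:(by rewrite hf).
by exists p; rewrite -hf // obj.
Qed.
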